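(* Let $\ell>0$ and let $\{\rho_k\}_{k\ge1}$, $\{\sigma_k\}_{k\ge2}$ be real constants satisfying $$\lim_{k\to\infty}\left|\frac{\sigma_{k+1}}{\sigma_k}\right|<\frac{1}{2\ell},\qquad \lim_{k\to\infty}\left|\frac{\rho_{k+1}}{\rho_k}\right|<\frac{1}{2\ell}.$$ Then for all $x\in[0,\infty)$ and $\xi\in[-1,1]$ the series $$\alpha(x,\xi)=\sum_{k=1}^\infty \rho_k\,\mathcal{P}_k(x)\,P^0_k(\xi)\,(x\ell)^k,\qquad \omega(x,\xi)=\sqrt{1-\xi^2}+\sum_{k=2}^\infty \sigma_k\,\mathcal{S}_k(x)\,P^1_{k-1}(\xi)\,(x\ell)^k$$ converge.
   Context: $\mathcal{P}_k(x)={}_2F_1\!\left(\frac{k}{2},\frac{k+1}{2};\frac{2k+3}{2};-x^2\right)$ and $\mathcal{S}_k(x)={}_2F_1\!\left(\frac{k}{2},\frac{k+1}{2};\frac{2k+1}{2};-x^2\right)$, with ${}_2F_1$ the Gauss hypergeometric function. $P^0_l(\xi)=\frac{1}{2^l l!}\frac{d^l}{d\xi^l}(\xi^2-1)^l$ is the Legendre polynomial and $P^1_l(\xi)=(1-\xi^2)^{1/2}\frac{d}{d\xi}P^0_l(\xi)$ the associated Legendre function of order 1. These series are the gauge fields of the $\mathfrak{su}(\infty)$ Einstein–Yang–Mills solutions expanded in the anti-de Sitter radius $\ell$, with $x=r/\ell$. *)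

From Stdlib Require Import Reals Arith Factorial.
From Coquelicot Require Import Coquelicot.
Open Scope R_scope.

Fixpoint poch (a : R) (n : nat) : R :=
  match n with
  | O => 1
  | S m => poch a m * (a + INR m)
  end.

Definition hyp_term (a b c z : R) (n : nat) : R :=
  poch a n * poch b n / (poch c n * INR (fact n)) * z ^ n.

(* Gauss hypergeometric function 2F1(a,b;c;z) on real z < 1:
   the Gauss series for |z| < 1, and for z <= -1 its (principal-branch)
   analytic continuation given by Pfaff's transformation
   2F1(a,b;c;z) = (1-z)^(-a) 2F1(a, c-b; c; z/(z-1)), where z/(z-1) in [1/2,1). *)
Definition hyp2F1 (a b c z : R) : R :=
  if Rlt_dec (Rabs z) 1 then Series (hyp_term a b c z)
  else Rpower (1 - z) (- a) * Series (hyp_term a (c - b) c (z / (z - 1))).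

Definition calP (k : nat) (x : R) : R :=
  hyp2F1 (INR k / 2) ((INR k + 1) / 2) ((2 * INR k + 3) / 2) (- x ^ 2).

Definition calS (k : nat) (x : R) : R :=
  hyp2F1 (INR k / 2) ((INR k + 1) / 2) ((2 * INR k + 1) / 2) (- x ^ 2).

Definition Legendre0 (l : nat) (xi : R) : R :=
  / (2 ^ l * INR (fact l)) * Derive_n (fun t => (t ^ 2 - 1) ^ l) l xi.

Definition Legendre1 (l : nat) (xi : R) : R :=
  sqrt (1 - xi ^ 2) * Derive (Legendre0 l) xi.

Definition alpha_term (rho : nat -> R) (ell x xi : R) (k : nat) : R :=
  rho k * calP k x * Legendre0 k xi * (x * ell) ^ k.

Definition omega_term (sigma : nat -> R) (ell x xi : R) (k : nat) : R :=
  sigma k * calS k x * Legendre1 (k - 1) xi * (x * ell) ^ k.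

(* Both series are dominated by series to which d'Alembert's ratio test applies.

   On [-1, 1] the Legendre functions are bounded, |P^0_l| <= 1 and |P^1_l| <= l + 1:
   in terms of u = (t^2 - 1)^l, the energy (u^(l))^2 + (1 - t^2) (u^(l+1))^2 / (l (l + 1))
   of Legendre's equation decreases for t < 0 and increases for t > 0, so it is bounded
   by its common value (l! 2^l)^2 at t = +-1.

   The hypergeometric factors grow at most geometrically in k. For k <= c <= k + 2 the
   Gauss coefficients of 2F1(k/2, b; c; .) with b = (k+1)/2, and also with the Pfaff
   parameter b = c - (k+1)/2, are at most those of 2F1(k/2, (k+1)/2; k; .), which the
   duplication formula turns into C(k+2n-1, n) / 4^n <= 2^k. Hence |2F1(-x^2)| <= 2^k / (1 - x^2)
   for x < 1, and Pfaff's transformation gives 2^k (1 + x^2) / (1 + x^2)^(k/2) for x >= 1.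
   In both cases the k-th terms are O(|rho_k| (2 theta ell)^k) and O(k |sigma_k| (2 theta ell)^k)
   with theta < 1, and lim |rho_(k+1) / rho_k| (2 theta ell) < 1. *)

From Stdlib Require Import Reals Lra Lia Psatz Factorial.
From Coquelicot Require Import Coquelicot.
Open Scope R_scope.

(** * Bounds on the Legendre functions *)

Definition smooth (f : R -> R) : Prop := forall n x, ex_derive (Derive_n f n) x.

Lemma smooth_ext (f g : R -> R) : (forall t, f t = g t) -> smooth f -> smooth g.
Proof.
  intros Efg Hf n x.
  apply (ex_derive_ext (Derive_n f n)); [intros t; apply Derive_n_ext, Efg | apply Hf].
Qed.

Lemma smooth_const (a : R) : smooth (fun _ => a).
Proof.
  intros [|n] x; [apply ex_derive_const |].
  apply (ex_derive_ext (fun _ => 0)); [intros t; symmetry; apply Derive_n_const |].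
  apply ex_derive_const.
Qed.

Lemma Derive_n_Derive (f : R -> R) (n : nat) : Derive_n (Derive f) n = Derive_n f (S n).
Proof. induction n as [|n IH]; simpl; [reflexivity | now rewrite IH]. Qed.

Lemma smooth_Derive (f : R -> R) : smooth f -> smooth (Derive f).
Proof. intros Hf n x. rewrite Derive_n_Derive. apply Hf. Qed.

Section LinearFactor.
Variables (c : R) (h : R -> R).
Hypothesis Hh : smooth h.

(* Leibniz's rule, all but two of whose terms vanish because [t + c] is linear. *)
Lemma Derive_n_linear_mul (m : nat) (t : R) :
  Derive_n (fun t => (t + c) * h t) (S m) t
  = (t + c) * Derive_n h (S m) t + INR (S m) * Derive_n h m t.
Proof.
  revert t; induction m as [|m IH]; intros t.
  - apply is_derive_unique. assert (H0 := Hh 0%nat t). auto_derive; simpl in *; [easy | ring].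
  - change (Derive_n (fun t => (t + c) * h t) (S (S m)) t)
      with (Derive (Derive_n (fun t => (t + c) * h t) (S m)) t).
    rewrite (Derive_ext _ _ _ IH).
    apply is_derive_unique.
    assert (H1 := Hh (S m) t). assert (H2 := Hh m t).
    (* [auto_derive] would unfold [INR (S m)] into a [match]. *)
    remember (INR (S m)) as N eqn:EN.
    auto_derive; [easy |].
    change (Derive (fun x => Derive (Derive_n h m) x) t) with (Derive_n h (S (S m)) t).
    change (Derive (fun x => Derive_n h m x) t) with (Derive_n h (S m) t).
    change (Derive (Derive_n h m) t) with (Derive_n h (S m) t).
    rewrite EN, (S_INR (S m)). ring.
Qed.

Lemma smooth_linear_mul : smooth (fun t => (t + c) * h t).
Proof.
  intros [|m] x.
  - assert (H0 := Hh 0%nat x). simpl in *. auto_derive. easy.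
  - apply (ex_derive_ext (fun t => (t + c) * Derive_n h (S m) t + INR (S m) * Derive_n h m t)).
    + intros t. symmetry. apply Derive_n_linear_mul.
    + assert (H1 := Hh (S m) x). assert (H2 := Hh m x). auto_derive. easy.
Qed.

End LinearFactor.

Lemma smooth_pow_mul (c : R) (l : nat) (g : R -> R) :
  smooth g -> smooth (fun t => (t + c) ^ l * g t).
Proof.
  intros Hg. induction l as [|l IH].
  - apply (smooth_ext g); [intros t; simpl; ring | exact Hg].
  - apply (smooth_ext (fun t => (t + c) * ((t + c) ^ l * g t))); [intros t; simpl; ring |].
    now apply smooth_linear_mul.
Qed.

Lemma smooth_pow (c : R) (l : nat) : smooth (fun t => (t + c) ^ l).
Proof.
  apply (smooth_ext (fun t => (t + c) ^ l * 1)); [intros t; ring |].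
  apply smooth_pow_mul, smooth_const.
Qed.

Lemma Derive_n_pow_mul_root (c : R) (g : R -> R) (l : nat) : smooth g ->
  (forall n, (n < l)%nat -> Derive_n (fun t => (t + c) ^ l * g t) n (- c) = 0) /\
  Derive_n (fun t => (t + c) ^ l * g t) l (- c) = INR (fact l) * g (- c).
Proof.
  intros Hg. induction l as [|l [IHlt IHeq]].
  - split; [intros n Hn; lia | simpl; ring].
  - assert (Hs := smooth_pow_mul c l g Hg).
    assert (E : forall n, Derive_n (fun t => (t + c) ^ S l * g t) n (- c)
                        = Derive_n (fun t => (t + c) * ((t + c) ^ l * g t)) n (- c))
      by (intros n; apply Derive_n_ext; intros t; simpl; ring).
    split.
    + intros [|n] Hn; rewrite E; [simpl; ring |].
      rewrite Derive_n_linear_mul, (IHlt n) by (assumption || lia). ring.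
    + rewrite E, Derive_n_linear_mul, IHeq by auto.
      rewrite fact_simpl, mult_INR. ring.
Qed.

Definition rodrigues (l : nat) (t : R) : R := (t ^ 2 - 1) ^ l.

Lemma rodrigues_factor (l : nat) (t : R) : rodrigues l t = (t + -1) ^ l * (t + 1) ^ l.
Proof. unfold rodrigues. rewrite <- Rpow_mult_distr. f_equal. ring. Qed.

Lemma smooth_rodrigues (l : nat) : smooth (rodrigues l).
Proof.
  apply (smooth_ext (fun t => (t + -1) ^ l * (t + 1) ^ l)).
  - intros t. symmetry. apply rodrigues_factor.
  - apply smooth_pow_mul, smooth_pow.
Qed.

Lemma Derive_n_rodrigues_1 (l : nat) : Derive_n (rodrigues l) l 1 = INR (fact l) * 2 ^ l.
Proof.
  rewrite (Derive_n_ext _ _ _ _ (rodrigues_factor l)).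
  replace 1 with (- -1) at 1 by ring.
  rewrite (proj2 (Derive_n_pow_mul_root (-1) _ l (smooth_pow 1 l))).
  f_equal. f_equal. ring.
Qed.

Lemma Derive_n_rodrigues_m1 (l : nat) : Derive_n (rodrigues l) l (-1) = INR (fact l) * (-2) ^ l.
Proof.
  rewrite (Derive_n_ext (rodrigues l) (fun t => (t + 1) ^ l * (t + -1) ^ l))
    by (intros t; rewrite rodrigues_factor; ring).
  replace (-1) with (- (1)) at 1 by ring.
  rewrite (proj2 (Derive_n_pow_mul_root 1 _ l (smooth_pow (-1) l))).
  f_equal. f_equal. ring.
Qed.

(* The relation [(t^2 - 1) u' = 2 l t u], with its linear factors split for [Derive_n_linear_mul]. *)
Lemma rodrigues_deriv_relation (l : nat) (t : R) :
  (t + -1) * ((t + 1) * Derive (rodrigues l) t) = 2 * INR l * ((t + 0) * rodrigues l t).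
Proof.
  destruct l as [|m].
  - unfold rodrigues. simpl. rewrite Derive_const. ring.
  - replace (Derive (rodrigues (S m)) t) with (INR (S m) * (t ^ 2 - 1) ^ m * (2 * t)).
    + unfold rodrigues. simpl. ring.
    + symmetry. apply is_derive_unique. unfold rodrigues.
      remember (INR (S m)) as N eqn:EN. auto_derive; [easy |].
      change (match m with 0%nat => 1 | S _ => INR m + 1 end) with (INR (S m)).
      replace (t * (t * 1) + - (1)) with (t ^ 2 - 1) by ring.
      rewrite EN. ring.
Qed.

Lemma rodrigues_ode (l : nat) (t : R) : (0 < l)%nat ->
  (t ^ 2 - 1) * Derive_n (rodrigues l) (S (S l)) t + 2 * t * Derive_n (rodrigues l) (S l) t
  - INR l * (INR l + 1) * Derive_n (rodrigues l) l t = 0.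
Proof.
  intros Hl.
  assert (Hu := smooth_rodrigues l).
  assert (Hv := smooth_Derive _ Hu).
  assert (E := Derive_n_ext _ _ (S l) t (rodrigues_deriv_relation l)).
  destruct l as [|m]; [lia |].
  rewrite Derive_n_linear_mul, Derive_n_linear_mul in E by (auto using smooth_linear_mul).
  rewrite Derive_n_scal_l, Derive_n_linear_mul, Derive_n_linear_mul in E by auto.
  rewrite !Derive_n_Derive in E.
  rewrite <- (Rminus_diag_eq _ _ E), !S_INR.
  ring.
Qed.

Lemma is_derive_legendre_energy (a0 a1 a2 : R -> R) (D t : R) :
  D <> 0 -> is_derive a0 t (a1 t) -> is_derive a1 t (a2 t) ->
  (t ^ 2 - 1) * a2 t + 2 * t * a1 t - D * a0 t = 0 ->
  is_derive (fun t => a0 t ^ 2 + (1 - t ^ 2) * a1 t ^ 2 / D) t (t * (2 * a1 t ^ 2 / D)).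
Proof.
  intros HD H0 H1 Hode.
  assert (E0 := is_derive_unique _ _ _ H0).
  assert (E1 := is_derive_unique _ _ _ H1).
  auto_derive.
  - repeat split; eexists; eassumption.
  - change (fun x => a0 x) with a0. change (fun x => a1 x) with a1.
    rewrite E0, E1. field_simplify_eq; [| exact HD].
    transitivity (2 * a1 t ^ 2 * t - 2 * a1 t * ((t ^ 2 - 1) * a2 t + 2 * t * a1 t - D * a0 t));
      [ring | rewrite Hode; ring].
Qed.

Lemma le_Rmax_ends_of_is_derive (f g : R -> R) (a b x : R) :
  (forall t, is_derive f t (t * g t)) -> (forall t, 0 <= g t) ->
  a <= x <= b -> f x <= Rmax (f a) (f b).
Proof.
  intros Hf Hg Hx.
  assert (Hc : forall t, continuity_pt f t).
  { intros t. apply derivable_continuous_pt. exists (t * g t). apply is_derive_Reals, Hf. }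
  destruct (Rle_or_lt 0 x) as [Hx0 | Hx0].
  - destruct (MVT_gen f x b (fun t => t * g t)) as [c [Hcxb E]];
      [intros; apply Hf | intros; apply Hc |].
    rewrite Rmin_left, Rmax_right in Hcxb by lra.
    assert (0 <= c * g c * (b - x)) by (assert (Hgc := Hg c); apply Rmult_le_pos; [nra | lra]).
    apply Rle_trans with (f b); [lra | apply Rmax_r].
  - destruct (MVT_gen f a x (fun t => t * g t)) as [c [Hcax E]];
      [intros; apply Hf | intros; apply Hc |].
    rewrite Rmin_left, Rmax_right in Hcax by lra.
    assert (0 <= - c * g c * (x - a)) by (assert (Hgc := Hg c); apply Rmult_le_pos; [nra | lra]).
    apply Rle_trans with (f a); [lra | apply Rmax_l].
Qed.

Lemma rodrigues_energy_le (l : nat) (xi : R) : (0 < l)%nat -> -1 <= xi <= 1 ->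
  Derive_n (rodrigues l) l xi ^ 2
  + (1 - xi ^ 2) * Derive_n (rodrigues l) (S l) xi ^ 2 / (INR l * (INR l + 1))
  <= (INR (fact l) * 2 ^ l) ^ 2.
Proof.
  intros Hl Hxi.
  set (D := INR l * (INR l + 1)).
  assert (HD : 0 < D) by (apply lt_0_INR in Hl; unfold D; nra).
  set (A n t := Derive_n (rodrigues l) n t).
  set (energy t := A l t ^ 2 + (1 - t ^ 2) * A (S l) t ^ 2 / D).
  assert (Hends : energy (-1) = (INR (fact l) * 2 ^ l) ^ 2 /\ energy 1 = (INR (fact l) * 2 ^ l) ^ 2).
  { unfold energy, A. rewrite Derive_n_rodrigues_m1, Derive_n_rodrigues_1.
    replace (-2) with (-1 * 2) by ring.
    rewrite !Rpow_mult_distr, <- (pow_mult (-1)), Nat.mul_comm, pow_mult.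
    replace ((-1) ^ 2) with 1 by ring. rewrite pow1.
    split; unfold Rdiv; ring. }
  change (energy xi <= (INR (fact l) * 2 ^ l) ^ 2).
  replace ((INR (fact l) * 2 ^ l) ^ 2) with (Rmax (energy (-1)) (energy 1))
    by (destruct Hends as [-> ->]; apply Rmax_left, Rle_refl).
  apply le_Rmax_ends_of_is_derive with (g := fun t => 2 * A (S l) t ^ 2 / D); [| | exact Hxi].
  - intros t. apply (is_derive_legendre_energy (A l) (A (S l)) (A (S (S l)))); [lra | | | apply rodrigues_ode, Hl];
      apply Derive_correct, smooth_rodrigues.
  - intros t. apply Rmult_le_pos; [nra | apply Rlt_le, Rinv_0_lt_compat, HD].
Qed.

Lemma Rabs_le_of_pow2_le (y B : R) : 0 <= B -> y ^ 2 <= B ^ 2 -> Rabs y <= B.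
Proof.
  intros HB Hy. rewrite <- (Rabs_pos_eq B HB).
  apply Rsqr_le_abs_0. rewrite !Rsqr_pow2. exact Hy.
Qed.

Lemma Legendre0_rodrigues (l : nat) (xi : R) :
  Legendre0 l xi = Derive_n (rodrigues l) l xi / (INR (fact l) * 2 ^ l).
Proof. unfold Legendre0, Rdiv. rewrite Rmult_comm, (Rmult_comm (INR (fact l))). reflexivity. Qed.

Lemma Legendre1_rodrigues (l : nat) (xi : R) :
  Legendre1 l xi = sqrt (1 - xi ^ 2) * (Derive_n (rodrigues l) (S l) xi / (INR (fact l) * 2 ^ l)).
Proof.
  unfold Legendre1. f_equal.
  rewrite (Derive_ext _ _ _ (Legendre0_rodrigues l)).
  unfold Rdiv. rewrite Derive_scal_l. reflexivity.
Qed.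

Lemma Legendre0_bound (l : nat) (xi : R) : (0 < l)%nat -> -1 <= xi <= 1 ->
  Rabs (Legendre0 l xi) <= 1.
Proof.
  intros Hl Hxi.
  assert (HE := rodrigues_energy_le l xi Hl Hxi).
  set (K := INR (fact l) * 2 ^ l) in HE.
  assert (HK : 0 < K) by (apply Rmult_lt_0_compat; [apply INR_fact_lt_0 | apply pow_lt; lra]).
  assert (Hrest : 0 <= (1 - xi ^ 2) * Derive_n (rodrigues l) (S l) xi ^ 2 / (INR l * (INR l + 1))).
  { apply Rmult_le_pos; [apply Rmult_le_pos; nra |].
    apply Rlt_le, Rinv_0_lt_compat. apply lt_0_INR in Hl. nra. }
  rewrite Legendre0_rodrigues. fold K.
  apply Rabs_le_of_pow2_le; [lra |].
  replace ((Derive_n (rodrigues l) l xi / K) ^ 2) with (Derive_n (rodrigues l) l xi ^ 2 / K ^ 2)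
    by (field; lra).
  apply Rmult_le_reg_r with (K ^ 2); [apply pow_lt, HK |].
  field_simplify; lra.
Qed.

Lemma Legendre1_bound (l : nat) (xi : R) : (0 < l)%nat -> -1 <= xi <= 1 ->
  Rabs (Legendre1 l xi) <= INR l + 1.
Proof.
  intros Hl Hxi.
  assert (HE := rodrigues_energy_le l xi Hl Hxi).
  set (K := INR (fact l) * 2 ^ l) in HE.
  set (D := INR l * (INR l + 1)) in HE.
  set (A1 := Derive_n (rodrigues l) (S l) xi) in HE.
  assert (HK : 0 < K) by (apply Rmult_lt_0_compat; [apply INR_fact_lt_0 | apply pow_lt; lra]).
  assert (HD : 0 < D) by (apply lt_0_INR in Hl; unfold D; nra).
  assert (Hxi2 : 0 <= 1 - xi ^ 2) by nra.
  assert (HA1 : (1 - xi ^ 2) * A1 ^ 2 <= D * K ^ 2).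
  { apply Rmult_le_reg_r with (/ D); [apply Rinv_0_lt_compat, HD |].
    replace (D * K ^ 2 * / D) with (K ^ 2) by (field; lra).
    assert (0 <= Derive_n (rodrigues l) l xi ^ 2) by apply pow2_ge_0.
    unfold Rdiv in HE. lra. }
  rewrite Legendre1_rodrigues. fold K A1.
  apply Rabs_le_of_pow2_le; [apply Rplus_le_le_0_compat; [apply pos_INR | lra] |].
  replace ((sqrt (1 - xi ^ 2) * (A1 / K)) ^ 2) with ((1 - xi ^ 2) * A1 ^ 2 / K ^ 2)
    by (rewrite Rpow_mult_distr, pow2_sqrt by exact Hxi2; field; lra).
  apply Rle_trans with D.
  - apply Rmult_le_reg_r with (K ^ 2); [apply pow_lt, HK |].
    field_simplify; lra.
  - unfold D. assert (0 <= INR l) by apply pos_INR. nra.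
Qed.

(** * Bounds on the hypergeometric factors *)

Definition hyp_coef (a b c : R) (n : nat) : R := poch a n * poch b n / (poch c n * INR (fact n)).

Lemma poch_nonneg (a : R) (n : nat) : 0 <= a -> 0 <= poch a n.
Proof.
  intros Ha. induction n as [|n IH]; simpl; [lra |].
  apply Rmult_le_pos; [exact IH |]. assert (0 <= INR n) by apply pos_INR. lra.
Qed.

Lemma poch_pos (a : R) (n : nat) : 0 < a -> 0 < poch a n.
Proof.
  intros Ha. induction n as [|n IH]; simpl; [lra |].
  apply Rmult_lt_0_compat; [exact IH |]. assert (0 <= INR n) by apply pos_INR. lra.
Qed.

Lemma poch_INR_fact (m n : nat) : poch (INR (S m)) n * INR (fact m) = INR (fact (m + n)).
Proof.
  induction n as [|n IH]; [simpl; rewrite Nat.add_0_r; ring |].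
  change (poch (INR (S m)) (S n)) with (poch (INR (S m)) n * (INR (S m) + INR n)).
  rewrite Nat.add_succ_r, fact_simpl, mult_INR, <- IH, !S_INR, plus_INR. ring.
Qed.

Lemma poch_duplication (a : R) (n : nat) :
  poch (a / 2) n * poch ((a + 1) / 2) n * 4 ^ n = poch a (2 * n).
Proof.
  induction n as [|n IH]; [simpl; ring |].
  replace (2 * S n)%nat with (S (S (2 * n))) by lia.
  change (poch a (S (S (2 * n)))) with (poch a (2 * n) * (a + INR (2 * n)) * (a + INR (S (2 * n)))).
  change (poch (a / 2) (S n)) with (poch (a / 2) n * (a / 2 + INR n)).
  change (poch ((a + 1) / 2) (S n)) with (poch ((a + 1) / 2) n * ((a + 1) / 2 + INR n)).
  rewrite <- IH, S_INR, mult_INR. simpl (INR 2). simpl pow. field.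
Qed.

Lemma poch_mul_le (a b c d : R) (n : nat) :
  (forall j : nat, 0 <= (a + INR j) * (b + INR j) <= (c + INR j) * (d + INR j)) ->
  0 <= poch a n * poch b n <= poch c n * poch d n.
Proof.
  intros H. induction n as [|n [IH0 IH1]]; simpl; [lra |].
  replace (poch a n * (a + INR n) * (poch b n * (b + INR n)))
    with (poch a n * poch b n * ((a + INR n) * (b + INR n))) by ring.
  replace (poch c n * (c + INR n) * (poch d n * (d + INR n)))
    with (poch c n * poch d n * ((c + INR n) * (d + INR n))) by ring.
  destruct (H n) as [Hn0 Hn1].
  split; [apply Rmult_le_pos | apply Rmult_le_compat]; assumption.
Qed.

Lemma hyp_coef_nonneg (a b c : R) (n : nat) : 0 <= a -> 0 <= b -> 0 < c -> 0 <= hyp_coef a b c n.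
Proof.
  intros Ha Hb Hc. unfold hyp_coef.
  apply Rmult_le_pos; [apply Rmult_le_pos; apply poch_nonneg; assumption |].
  apply Rlt_le, Rinv_0_lt_compat, Rmult_lt_0_compat; [apply poch_pos, Hc | apply INR_fact_lt_0].
Qed.

Lemma hyp_coef_le (a b c b' c' : R) (n : nat) :
  0 <= a -> 0 <= b -> 0 < c -> 0 < c' ->
  (forall j : nat, (b + INR j) * (c' + INR j) <= (b' + INR j) * (c + INR j)) ->
  hyp_coef a b c n <= hyp_coef a b' c' n.
Proof.
  intros Ha Hb Hc Hc' Hj. unfold hyp_coef.
  assert (Hpc := poch_pos c n Hc). assert (Hpc' := poch_pos c' n Hc').
  assert (Hf := INR_fact_lt_0 n). assert (Hpa := poch_nonneg a n Ha).
  assert (Hfactors : forall j : nat, 0 <= (b + INR j) * (c' + INR j) <= (b' + INR j) * (c + INR j)).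
  { intros j. split; [| apply Hj]. assert (0 <= INR j) by apply pos_INR. apply Rmult_le_pos; lra. }
  assert (Hle := proj2 (poch_mul_le b c' b' c n Hfactors)).
  apply Rmult_le_reg_r with (poch c n * poch c' n * INR (fact n));
    [repeat apply Rmult_lt_0_compat; assumption |].
  replace (poch a n * poch b n / (poch c n * INR (fact n)) * (poch c n * poch c' n * INR (fact n)))
    with (poch a n * (poch b n * poch c' n)) by (field; lra).
  replace (poch a n * poch b' n / (poch c' n * INR (fact n)) * (poch c n * poch c' n * INR (fact n)))
    with (poch a n * (poch b' n * poch c n)) by (field; lra).
  apply Rmult_le_compat_l; assumption.
Qed.

Lemma binomial_le_pow2 (N n : nat) : (n <= N)%nat -> Binomial.C N n <= 2 ^ N.
Proof.
  assert (Hends : forall N, Binomial.C N 0 = 1 /\ Binomial.C N N = 1).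
  { intros M. unfold Binomial.C. rewrite Nat.sub_0_r, Nat.sub_diag. simpl.
    assert (H := INR_fact_lt_0 M). split; field; lra. }
  revert n; induction N as [|N IH]; intros n Hn.
  - replace n with 0%nat by lia. rewrite (proj1 (Hends 0%nat)). simpl. lra.
  - assert (H1 : 1 <= 2 ^ S N) by (apply pow_R1_Rle; lra).
    destruct n as [|i]; [rewrite (proj1 (Hends _)); exact H1 |].
    destruct (Nat.eq_dec i N) as [-> | Hne]; [rewrite (proj2 (Hends _)); exact H1 |].
    rewrite <- pascal by lia.
    assert (IH1 := IH i ltac:(lia)). assert (IH2 := IH (S i) ltac:(lia)).
    simpl. lra.
Qed.

(* By the duplication formula, [hyp_coef (k/2) ((k+1)/2) k n = C(k+2n-1, n) / 4^n]. *)
Lemma hyp_coef_le_pow2 (k n : nat) : (1 <= k)%nat ->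
  hyp_coef (INR k / 2) ((INR k + 1) / 2) (INR k) n <= 2 ^ k.
Proof.
  intros Hk. destruct k as [|m]; [lia |].
  assert (Hdup := poch_duplication (INR (S m)) n).
  assert (H2n := poch_INR_fact m (2 * n)). assert (Hn := poch_INR_fact m n).
  assert (HC := binomial_le_pow2 (m + 2 * n) n ltac:(lia)).
  unfold Binomial.C in HC. replace (m + 2 * n - n)%nat with (m + n)%nat in HC by lia.
  assert (Hfm := INR_fact_lt_0 m). assert (Hfn := INR_fact_lt_0 n).
  assert (Hfmn := INR_fact_lt_0 (m + n)).
  assert (H4 : 0 < 4 ^ n) by (apply pow_lt; lra).
  replace (hyp_coef (INR (S m) / 2) ((INR (S m) + 1) / 2) (INR (S m)) n)
    with (INR (fact (m + 2 * n)) / (INR (fact n) * INR (fact (m + n))) / 4 ^ n).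
  - apply Rle_trans with (2 ^ (m + 2 * n) / 4 ^ n).
    + apply Rmult_le_compat_r; [apply Rlt_le, Rinv_0_lt_compat, H4 | exact HC].
    + rewrite pow_add, pow_mult. replace (2 ^ 2) with 4 by ring.
      replace (2 ^ m * 4 ^ n / 4 ^ n) with (2 ^ m) by (field; lra).
      assert (0 < 2 ^ m) by (apply pow_lt; lra). simpl. lra.
  - unfold hyp_coef. rewrite <- H2n, <- Hn, <- Hdup. field.
    assert (poch (INR (S m)) n > 0) by (apply poch_pos, lt_0_INR; lia).
    repeat split; lra.
Qed.

Lemma hyp_term_abs_le (k : nat) (b c z : R) (n : nat) :
  (1 <= k)%nat -> 0 <= b -> 0 < c ->
  (forall j : nat, (b + INR j) * (INR k + INR j) <= ((INR k + 1) / 2 + INR j) * (c + INR j)) ->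
  Rabs (hyp_term (INR k / 2) b c z n) <= 2 ^ k * Rabs z ^ n.
Proof.
  intros Hk Hb Hc Hj.
  assert (Hk0 : 0 < INR k) by (apply lt_0_INR; lia).
  change (hyp_term (INR k / 2) b c z n) with (hyp_coef (INR k / 2) b c n * z ^ n).
  rewrite Rabs_mult, <- RPow_abs, (Rabs_pos_eq (hyp_coef _ _ _ _)) by (apply hyp_coef_nonneg; lra).
  apply Rmult_le_compat_r; [apply pow_le, Rabs_pos |].
  apply Rle_trans with (hyp_coef (INR k / 2) ((INR k + 1) / 2) (INR k) n).
  - apply hyp_coef_le; [lra | exact Hb | exact Hc | exact Hk0 | exact Hj].
  - apply hyp_coef_le_pow2, Hk.
Qed.

Lemma Rabs_Series_le_geom (t : nat -> R) (B q : R) : 0 <= q < 1 ->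
  (forall n, Rabs (t n) <= B * q ^ n) -> Rabs (Series t) <= B / (1 - q).
Proof.
  intros Hq Ht.
  assert (Hgeom : ex_series (fun n => B * q ^ n)).
  { apply (ex_series_scal_l B (fun n => q ^ n)), ex_series_geom. rewrite Rabs_pos_eq; lra. }
  assert (Habs : ex_series (fun n => Rabs (t n))).
  { apply (ex_series_le (fun n => Rabs (t n)) (fun n => B * q ^ n)); [| exact Hgeom].
    intros n. change norm with Rabs. simpl. rewrite Rabs_Rabsolu. apply Ht. }
  eapply Rle_trans; [apply Series_Rabs, Habs |].
  eapply Rle_trans; [apply Series_le; [intros n; split; [apply Rabs_pos | apply Ht] | exact Hgeom] |].
  rewrite Series_scal_l, Series_geom by (rewrite Rabs_pos_eq; lra). unfold Rdiv. lra.
Qed.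

Lemma hyp2F1_bound_inside (k : nat) (c x : R) :
  (1 <= k)%nat -> INR k <= c <= INR k + 2 -> x ^ 2 < 1 ->
  Rabs (hyp2F1 (INR k / 2) ((INR k + 1) / 2) c (- x ^ 2)) <= 2 ^ k / (1 - x ^ 2).
Proof.
  intros Hk Hc Hx.
  assert (Hk1 : 1 <= INR k) by (apply (le_INR 1); lia).
  assert (Hz : Rabs (- x ^ 2) = x ^ 2) by (rewrite Rabs_Ropp; apply Rabs_pos_eq, pow2_ge_0).
  unfold hyp2F1. destruct (Rlt_dec (Rabs (- x ^ 2)) 1) as [_ | Hge]; [| lra].
  rewrite <- Hz at 2. apply Rabs_Series_le_geom; [rewrite Hz; split; [apply pow2_ge_0 | exact Hx] |].
  intros n. apply hyp_term_abs_le; [exact Hk | lra | lra |].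
  intros j. assert (0 <= INR j) by apply pos_INR. nra.
Qed.

(* Pfaff's transformation maps [-x^2] to [w = x^2 / (1 + x^2)] and contributes [(1 + x^2)^(-k/2)]. *)
Lemma hyp2F1_bound_outside (k : nat) (c x : R) :
  (1 <= k)%nat -> INR k <= c <= INR k + 2 -> 1 <= x ^ 2 ->
  Rabs (hyp2F1 (INR k / 2) ((INR k + 1) / 2) c (- x ^ 2))
  <= 2 ^ k * (1 + x ^ 2) / sqrt (1 + x ^ 2) ^ k.
Proof.
  intros Hk Hc Hx.
  assert (Hk1 : 1 <= INR k) by (apply (le_INR 1); lia).
  assert (Hs : 0 < sqrt (1 + x ^ 2)) by (apply sqrt_lt_R0; lra).
  unfold hyp2F1. destruct (Rlt_dec (Rabs (- x ^ 2)) 1) as [Hlt | _].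
  { rewrite Rabs_Ropp, Rabs_pos_eq in Hlt by apply pow2_ge_0. lra. }
  set (w := - x ^ 2 / (- x ^ 2 - 1)).
  assert (Hw : w = 1 - / (1 + x ^ 2)) by (unfold w; field; lra).
  assert (Hw01 : 0 <= w < 1).
  { assert (0 < / (1 + x ^ 2)) by (apply Rinv_0_lt_compat; lra).
    assert (/ (1 + x ^ 2) <= 1) by (rewrite <- Rinv_1; apply Rinv_le_contravar; lra).
    rewrite Hw. lra. }
  assert (Hpow : Rpower (1 - - x ^ 2) (- (INR k / 2)) = / sqrt (1 + x ^ 2) ^ k).
  { rewrite Rpower_Ropp. f_equal.
    replace (1 - - x ^ 2) with (1 + x ^ 2) by ring.
    replace (INR k / 2) with (/ 2 * INR k) by field.
    rewrite <- Rpower_mult, Rpower_sqrt by lra. apply Rpower_pow, Hs. }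
  assert (HS : Rabs (Series (hyp_term (INR k / 2) (c - (INR k + 1) / 2) c w)) <= 2 ^ k * (1 + x ^ 2)).
  { replace (2 ^ k * (1 + x ^ 2)) with (2 ^ k / (1 - w)) by (rewrite Hw; field; lra).
    apply Rabs_Series_le_geom; [exact Hw01 |].
    intros n. rewrite <- (Rabs_pos_eq w) at 2 by lra.
    apply hyp_term_abs_le; [exact Hk | lra | lra |].
    intros j. assert (0 <= INR j) by apply pos_INR. nra. }
  rewrite Rabs_mult, Hpow, Rabs_pos_eq by (apply Rlt_le, Rinv_0_lt_compat, pow_lt, Hs).
  unfold Rdiv. rewrite Rmult_comm. apply Rmult_le_compat_r; [apply Rlt_le, Rinv_0_lt_compat, pow_lt, Hs |].
  exact HS.
Qed.

Lemma hyp2F1_pow_le_geom (x : R) : 0 <= x -> exists K theta, 0 < theta < 1 /\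
  forall k c, (1 <= k)%nat -> INR k <= c <= INR k + 2 ->
  Rabs (hyp2F1 (INR k / 2) ((INR k + 1) / 2) c (- x ^ 2)) * x ^ k <= K * (2 * theta) ^ k.
Proof.
  intros Hx. destruct (Rlt_or_le (x ^ 2) 1) as [Hx1 | Hx1].
  - exists (/ (1 - x ^ 2)), ((1 + x) / 2).
    split; [nra |].
    intros k c Hk Hc.
    replace (2 * ((1 + x) / 2)) with (1 + x) by field.
    apply Rle_trans with (2 ^ k / (1 - x ^ 2) * x ^ k).
    + apply Rmult_le_compat_r; [apply pow_le, Hx | apply hyp2F1_bound_inside; assumption].
    + unfold Rdiv. rewrite (Rmult_comm (2 ^ k)), Rmult_assoc, <- Rpow_mult_distr.
      apply Rmult_le_compat_l; [apply Rlt_le, Rinv_0_lt_compat; lra |].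
      apply pow_incr. nra.
  - set (s := sqrt (1 + x ^ 2)).
    assert (Hs : 0 < s) by (apply sqrt_lt_R0; lra).
    assert (Hs2 : s * s = 1 + x ^ 2) by (apply sqrt_sqrt; lra).
    assert (Hx0 : 0 < x) by nra.
    exists (1 + x ^ 2), (x / s).
    split.
    + split; [apply Rdiv_lt_0_compat; assumption |].
      apply Rmult_lt_reg_r with s; [exact Hs |]. unfold Rdiv. rewrite Rmult_assoc, Rinv_l by lra. nra.
    + intros k c Hk Hc.
      apply Rle_trans with (2 ^ k * (1 + x ^ 2) / s ^ k * x ^ k).
      * apply Rmult_le_compat_r; [apply pow_le, Hx | apply hyp2F1_bound_outside; assumption].
      * right. unfold Rdiv. rewrite !Rpow_mult_distr, pow_inv. field. apply pow_nonzero. lra.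
Qed.

(** * Convergence *)

Lemma alpha_term_le (rho : nat -> R) (ell x xi K theta : R) (k : nat) :
  0 < ell -> 0 <= x -> -1 <= xi <= 1 -> (1 <= k)%nat ->
  Rabs (calP k x) * x ^ k <= K * (2 * theta) ^ k ->
  Rabs (alpha_term rho ell x xi k) <= K * (Rabs (rho k) * (2 * theta * ell) ^ k).
Proof.
  intros Hell Hx Hxi Hk HP.
  assert (HL := Legendre0_bound k xi Hk Hxi).
  unfold alpha_term.
  rewrite !Rabs_mult, (Rpow_mult_distr x ell), (Rpow_mult_distr (2 * theta) ell),
    (Rabs_pos_eq (x ^ k * ell ^ k))
    by (apply Rmult_le_pos; apply pow_le; lra).
  replace (Rabs (rho k) * Rabs (calP k x) * Rabs (Legendre0 k xi) * (x ^ k * ell ^ k))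
    with (Rabs (rho k) * ell ^ k * (Rabs (calP k x) * x ^ k * Rabs (Legendre0 k xi))) by ring.
  replace (K * (Rabs (rho k) * ((2 * theta) ^ k * ell ^ k)))
    with (Rabs (rho k) * ell ^ k * (K * (2 * theta) ^ k * 1)) by ring.
  apply Rmult_le_compat_l; [apply Rmult_le_pos; [apply Rabs_pos | apply pow_le; lra] |].
  apply Rmult_le_compat; [apply Rmult_le_pos; [apply Rabs_pos | apply pow_le, Hx] | apply Rabs_pos | exact HP | exact HL].
Qed.

Lemma omega_term_le (sigma : nat -> R) (ell x xi K theta : R) (k : nat) :
  0 < ell -> 0 <= x -> -1 <= xi <= 1 -> (2 <= k)%nat ->
  Rabs (calS k x) * x ^ k <= K * (2 * theta) ^ k ->
  Rabs (omega_term sigma ell x xi k) <= K * (Rabs (sigma k) * INR k * (2 * theta * ell) ^ k).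
Proof.
  intros Hell Hx Hxi Hk HS.
  assert (HL := Legendre1_bound (k - 1) xi ltac:(lia) Hxi).
  replace (INR (k - 1) + 1) with (INR k) in HL by (rewrite minus_INR by lia; simpl; ring).
  unfold omega_term.
  rewrite !Rabs_mult, (Rpow_mult_distr x ell), (Rpow_mult_distr (2 * theta) ell),
    (Rabs_pos_eq (x ^ k * ell ^ k))
    by (apply Rmult_le_pos; apply pow_le; lra).
  replace (Rabs (sigma k) * Rabs (calS k x) * Rabs (Legendre1 (k - 1) xi) * (x ^ k * ell ^ k))
    with (Rabs (sigma k) * ell ^ k * (Rabs (calS k x) * x ^ k * Rabs (Legendre1 (k - 1) xi))) by ring.
  replace (K * (Rabs (sigma k) * INR k * ((2 * theta) ^ k * ell ^ k)))
    with (Rabs (sigma k) * ell ^ k * (K * (2 * theta) ^ k * INR k)) by ring.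
  apply Rmult_le_compat_l; [apply Rmult_le_pos; [apply Rabs_pos | apply pow_le; lra] |].
  apply Rmult_le_compat; [apply Rmult_le_pos; [apply Rabs_pos | apply pow_le, Hx] | apply Rabs_pos | exact HS | exact HL].
Qed.

Lemma is_lim_seq_INR_succ_ratio : is_lim_seq (fun n => INR (S n) / INR n) 1.
Proof.
  assert (Hinv : is_lim_seq (fun n => / INR n) 0).
  { replace (Finite 0) with (Rbar_inv p_infty) by reflexivity.
    apply is_lim_seq_inv; [apply is_lim_seq_INR | discriminate]. }
  apply is_lim_seq_incr_1 in Hinv.
  apply (is_lim_seq_plus' (fun _ => 1) _ 1 0 (is_lim_seq_const 1)) in Hinv.
  rewrite Rplus_0_r in Hinv.
  apply is_lim_seq_incr_1. eapply is_lim_seq_ext; [| exact Hinv].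
  intros n. rewrite (S_INR (S n)). field. apply not_0_INR. discriminate.
Qed.

Lemma ex_series_le_weighted_ratio (t a w : nat -> R) (C L r : R) (m : nat) :
  (forall n, a n <> 0) -> (forall n, 0 < w n) ->
  is_lim_seq (fun n => Rabs (a (S n) / a n)) L -> is_lim_seq (fun n => w (S n) / w n) 1 ->
  0 < r -> L * r < 1 ->
  (forall n, Rabs (t n) <= C * (Rabs (a n) * w n * r ^ (n + m))) -> ex_series t.
Proof.
  intros Ha Hw HaL Hw1 Hr HLr Ht.
  assert (Hb : forall n, 0 < Rabs (a n) * w n * r ^ n).
  { intros n. apply Rmult_lt_0_compat; [apply Rmult_lt_0_compat; [apply Rabs_pos_lt, Ha | apply Hw] |].
    apply pow_lt, Hr. }
  assert (Hratio : ex_series (fun n => Rabs (Rabs (a n) * w n * r ^ n))).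
  { apply ex_series_DAlembert with (L * r); [exact HLr | intros n; apply Rgt_not_eq, Hb |].
    apply (is_lim_seq_ext (fun n => Rabs (a (S n) / a n) * (w (S n) / w n) * r)).
    - intros n. assert (Hwn := Hw n). assert (Hrn : r ^ n <> 0) by (apply pow_nonzero; lra).
      assert (Han : Rabs (a n) <> 0) by apply Rabs_no_R0, Ha.
      rewrite (Rabs_pos_eq (Rabs (a (S n)) * w (S n) * r ^ S n / (Rabs (a n) * w n * r ^ n)))
        by (apply Rlt_le, Rdiv_lt_0_compat; apply Hb).
      rewrite Rabs_div by apply Ha. simpl pow. field. lra.
    - replace (L * r) with (L * 1 * r) by ring.
      apply (is_lim_seq_scal_r _ r (L * 1)), is_lim_seq_mult'; assumption. }
  apply (ex_series_le t (fun n => C * r ^ m * Rabs (Rabs (a n) * w n * r ^ n))).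
  - intros n. change norm with Rabs. simpl.
    rewrite (Rabs_pos_eq (Rabs (a n) * w n * r ^ n)) by apply Rlt_le, Hb.
    eapply Rle_trans; [apply Ht |].
    rewrite pow_add. right. ring.
  - exact (ex_series_scal_l (C * r ^ m) _ Hratio).
Qed.

Lemma lim_Rabs_nonneg (u : nat -> R) (L : R) : is_lim_seq (fun n => Rabs (u n)) L -> 0 <= L.
Proof.
  intros H. apply (is_lim_seq_le (fun _ => 0) (fun n => Rabs (u n)) 0 L);
    [intros; apply Rabs_pos | apply is_lim_seq_const | exact H].
Qed.

Lemma ratio_scaled_lt_1 (L ell theta : R) :
  0 <= L -> L < / (2 * ell) -> 0 < ell -> 0 < theta < 1 -> L * (2 * theta * ell) < 1.
Proof.
  intros HL HLlt Hell Htheta.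
  assert (H : L * (2 * ell) < / (2 * ell) * (2 * ell)) by (apply Rmult_lt_compat_r; lra).
  rewrite Rinv_l in H by lra. nra.
Qed.

Lemma ex_series_alpha (rho : nat -> R) (ell x xi K theta L : R) :
  0 < ell -> 0 <= x -> -1 <= xi <= 1 -> 0 < theta < 1 ->
  (forall k, (1 <= k)%nat -> rho k <> 0) ->
  is_lim_seq (fun k => Rabs (rho (S k) / rho k)) L -> L < / (2 * ell) ->
  (forall k, (1 <= k)%nat -> Rabs (calP k x) * x ^ k <= K * (2 * theta) ^ k) ->
  ex_series (fun n => alpha_term rho ell x xi (n + 1)).
Proof.
  intros Hell Hx Hxi Htheta Hrho0 HL HLlt HP.
  apply (ex_series_le_weighted_ratio _ (fun n => rho (n + 1)%nat) (fun _ => 1) K L (2 * theta * ell) 1).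
  - intros n. apply Hrho0. lia.
  - intros n. lra.
  - apply (is_lim_seq_incr_n _ 1) in HL. eapply is_lim_seq_ext; [| exact HL].
    intros n. reflexivity.
  - apply is_lim_seq_ext with (fun _ => 1); [intros n; field | apply is_lim_seq_const].
  - nra.
  - apply ratio_scaled_lt_1; [eapply lim_Rabs_nonneg; exact HL | assumption..].
  - intros n. rewrite Rmult_1_r. apply alpha_term_le; [assumption.. | lia | apply HP; lia].
Qed.

Lemma ex_series_omega (sigma : nat -> R) (ell x xi K theta L : R) :
  0 < ell -> 0 <= x -> -1 <= xi <= 1 -> 0 < theta < 1 ->
  (forall k, (2 <= k)%nat -> sigma k <> 0) ->
  is_lim_seq (fun k => Rabs (sigma (S k) / sigma k)) L -> L < / (2 * ell) ->
  (forall k, (2 <= k)%nat -> Rabs (calS k x) * x ^ k <= K * (2 * theta) ^ k) ->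
  ex_series (fun n => omega_term sigma ell x xi (n + 2)).
Proof.
  intros Hell Hx Hxi Htheta Hsigma0 HL HLlt HS.
  apply (ex_series_le_weighted_ratio _ (fun n => sigma (n + 2)%nat) (fun n => INR (n + 2))
           K L (2 * theta * ell) 2).
  - intros n. apply Hsigma0. lia.
  - intros n. apply lt_0_INR. lia.
  - apply (is_lim_seq_incr_n _ 2) in HL. eapply is_lim_seq_ext; [| exact HL].
    intros n. reflexivity.
  - eapply is_lim_seq_ext; [| exact (proj1 (is_lim_seq_incr_n _ 2 _) is_lim_seq_INR_succ_ratio)].
    intros n. reflexivity.
  - nra.
  - apply ratio_scaled_lt_1; [eapply lim_Rabs_nonneg; exact HL | assumption..].
  - intros n. apply omega_term_le; [assumption.. | lia | apply HS; lia].
Qed.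

Theorem proposition2 (ell : R) (rho sigma : nat -> R)
  (Hell : 0 < ell)
  (Hrho0 : forall k, (1 <= k)%nat -> rho k <> 0)
  (Hsigma0 : forall k, (2 <= k)%nat -> sigma k <> 0)
  (Hsigma : exists L : R,
     is_lim_seq (fun k => Rabs (sigma (S k) / sigma k)) L /\ L < / (2 * ell))
  (Hrho : exists L : R,
     is_lim_seq (fun k => Rabs (rho (S k) / rho k)) L /\ L < / (2 * ell)) :
  forall x xi : R, 0 <= x -> -1 <= xi <= 1 ->
    ex_series (fun n => alpha_term rho ell x xi (n + 1)%nat) /\
    ex_series (fun n => omega_term sigma ell x xi (n + 2)%nat).
Proof.
  intros x xi Hx Hxi.
  destruct (hyp2F1_pow_le_geom x Hx) as (K & theta & Htheta & HF).
  destruct Hrho as (Lrho & HLrho & HLrho_lt).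
  destruct Hsigma as (Lsigma & HLsigma & HLsigma_lt).
  split.
  - apply (ex_series_alpha rho ell x xi K theta Lrho); try assumption.
    intros k Hk. apply HF; [exact Hk | split; lra].
  - apply (ex_series_omega sigma ell x xi K theta Lsigma); try assumption.
    intros k Hk. apply HF; [lia | split; lra].
Qed.
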